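(* Every connected (finite, simple) graph $G$ satisfies $\mathrm{rc}(G) \leq 3\,\mathrm{f}(G) - 1$.
   Context: For an edge-coloring of a graph $G$, a path is rainbow if no two of its edges have the same color; $G$ is rainbow-connected if every pair of vertices is joined by a rainbow path. The rainbow connection number $\mathrm{rc}(G)$ is the minimum number of colors in an edge-coloring making $G$ rainbow-connected. The forest number $\mathrm{f}(G)$ is the maximum number of vertices of an induced subgraph of $G$ that is a forest. *)

From mathcomp Require Import all_boot.
Set Implicit Arguments. Unset Strict Implicit. Unset Printing Implicit Defensive.

Definition simple_graph (T : finType) (e : rel T) : Prop :=
  symmetric e /\ irreflexive e.

Definition connected_graph (T : finType) (e : rel T) : Prop :=
  forall x y : T, connect e x y.

Definition walk_edges (T : Type) (x : T) (p : seq T) : seq (T * T) :=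
  zip (x :: p) p.

(* An edge-colouring with (at most) k colours: c u v is the colour of the
   edge uv; it must not depend on the orientation of the edge. *)
Definition edge_coloring (T : finType) (e : rel T) (k : nat)
  (c : T -> T -> 'I_k) : Prop :=
  forall u v, e u v -> c u v = c v u.

Definition rainbow_path (T : finType) (e : rel T) (k : nat)
  (c : T -> T -> 'I_k) (x y : T) (p : seq T) : bool :=
  [&& path e x p, uniq (x :: p), last x p == y &
      uniq [seq c uv.1 uv.2 | uv <- walk_edges x p]].

Definition rainbow_connected (T : finType) (e : rel T) (k : nat)
  (c : T -> T -> 'I_k) : Prop :=
  forall x y : T, exists p : seq T, rainbow_path e c x y p.

(* rc(G) <= m  iff some edge-colouring with at most m colours makes G
   rainbow-connected. *)
Definition rc_le (T : finType) (e : rel T) (m : nat) : Prop :=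
  exists k (c : T -> T -> 'I_k),
    k <= m /\ edge_coloring e c /\ rainbow_connected e c.

(* A cycle inside S: at least 3 distinct vertices of S, consecutive ones
   adjacent, last adjacent to first. *)
Definition cycle_in (T : finType) (e : rel T) (S : {set T}) (x : T)
  (p : seq T) : bool :=
  [&& 2 <= size p, uniq (x :: p), all (fun v => v \in S) (x :: p),
      path e x p & e (last x p) x].

Definition induced_forest (T : finType) (e : rel T) (S : {set T}) : Prop :=
  forall x p, ~~ cycle_in e S x p.

Definition is_forest_number (T : finType) (e : rel T) (f : nat) : Prop :=
  (exists S : {set T}, induced_forest e S /\ #|S| = f) /\
  (forall S : {set T}, induced_forest e S -> #|S| <= f).

(* Let F be a maximum induced forest. By maximality every vertex outside F closes a
   cycle with F, hence has two distinct neighbours in F. Grow, from one vertex of F,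
   a set D that is rainbow-connected through paths inside D using k colours, keeping
   k + 3 <= 3 |D ∩ F|: while F is not inside D, connectivity provides a path of at
   most three new vertices hanging off D and containing a vertex of F, and each new
   vertex costs one fresh colour on its edges to D. Once F ⊆ D we have k <= 3f - 3
   and every vertex outside D has two neighbours in D; giving the edge to one of
   them colour k + 1 and every other edge into D colour k, any two vertices are
   joined by leaving and entering D along differently coloured edges, so
   rc(G) <= k + 2 <= 3f - 1. *)

From Stdlib Require Import Classical.
From mathcomp Require Import all_boot zify.
Set Implicit Arguments. Unset Strict Implicit. Unset Printing Implicit Defensive.

Lemma all_gtn_notin k (s : seq nat) : all (gtn k) s -> k \notin s.
Proof. by move=> lt_s; apply/negP => /(allP lt_s); rewrite /= ltnn. Qed.

Lemma all_gtn_widen k k' (s : seq nat) : k <= k' -> all (gtn k) s -> all (gtn k') s.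
Proof. by move=> le_kk'; apply: sub_all => c /= /leq_trans; apply. Qed.

Section RainbowWithin.
Variables (T : finType) (e : rel T).
Hypothesis esym : symmetric e.

Definition walk_colours (col : T -> T -> nat) (x : T) (p : seq T) : seq nat :=
  [seq col uv.1 uv.2 | uv <- walk_edges x p].

Lemma walk_colours_rcons col x p z :
  walk_colours col x (rcons p z) = rcons (walk_colours col x p) (col (last x p) z).
Proof. by elim: p x => [|y p IH] x //=; rewrite -IH. Qed.

Lemma eq_in_walk_colours (D : {set T}) col col' x p :
  {in D &, col =2 col'} -> x \in D -> all [in D] p ->
  walk_colours col x p = walk_colours col' x p.
Proof.
move=> eq_col; elim: p x => [|y p IH] x //= xD /andP[yD pD].
by rewrite /walk_colours /= eq_col //; congr (_ :: _); exact: IH.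
Qed.

Definition rainbow_path_within (D : {set T}) (k : nat) (col : T -> T -> nat)
    (x y : T) (p : seq T) : Prop :=
  [/\ path e x p, uniq (x :: p), last x p = y, all [in D] p &
      uniq (walk_colours col x p) && all (gtn k) (walk_colours col x p)].

Definition rainbow_within (D : {set T}) (k : nat) : Prop :=
  exists col : T -> T -> nat, (forall a b, col a b = col b a) /\
    forall x y, x \in D -> y \in D -> exists p, rainbow_path_within D k col x y p.

Lemma rainbow_within1 y : rainbow_within [set y] 0.
Proof.
exists (fun _ _ => 0); split=> // a b /set1P -> /set1P ->.
by exists [::]; split.
Qed.

Lemma notin_walk_within (D : {set T}) v x p :
  v \notin D -> x \in D -> all [in D] p -> v \notin x :: p.
Proof.
move=> vD xD pD; rewrite inE negb_or; apply/andP; split.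
  by apply: contraNneq vD => ->.
by apply/negP => /(allP pD) vD'; rewrite vD' in vD.
Qed.

Lemma rainbow_path_within_sub (D D' : {set T}) k k' col x y p :
  D \subset D' -> k <= k' ->
  rainbow_path_within D k col x y p -> rainbow_path_within D' k' col x y p.
Proof.
move=> sDD' le_kk' [px ux lx pD /andP[uc ltc]]; split=> //.
  by apply: sub_all pD => z /(subsetP sDD').
by rewrite uc (all_gtn_widen le_kk').
Qed.

Lemma rainbow_path_within_eq_col (D : {set T}) k col col' x y p :
  {in D &, col =2 col'} -> x \in D ->
  rainbow_path_within D k col x y p -> rainbow_path_within D k col' x y p.
Proof.
move=> eq_col xD [px ux lx pD cp]; split=> //.
by rewrite -(eq_in_walk_colours eq_col xD pD).
Qed.

Lemma rainbow_path_within_cons (D : {set T}) col v u y p :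
  u \in D -> v \notin D -> e v u ->
  rainbow_path_within D (col v u) col u y p ->
  rainbow_path_within (v |: D) (col v u).+1 col v y (u :: p).
Proof.
move=> uD vD evu [pu uu lu pD /andP[uc ltc]]; split=> //=.
- by rewrite evu.
- by rewrite (notin_walk_within vD uD pD).
- rewrite in_setU1 uD orbT; apply: sub_all pD => z zD.
  by rewrite in_setU1 zD orbT.
- rewrite /walk_colours /= -/(walk_colours col u p).
  by rewrite all_gtn_notin // uc ltnSn (all_gtn_widen (leqnSn _)).
Qed.

Lemma rainbow_path_within_rcons (D : {set T}) col x u v p :
  x \in D -> v \notin D -> e u v ->
  rainbow_path_within D (col u v) col x u p ->
  rainbow_path_within (v |: D) (col u v).+1 col x v (rcons p v).
Proof.
move=> xD vD euv [px ux lx pD /andP[uc ltc]]; split.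
- by rewrite rcons_path px lx.
- by rewrite -rcons_cons rcons_uniq (notin_walk_within vD xD pD).
- exact: last_rcons.
- rewrite all_rcons setU11; apply: sub_all pD => z zD.
  by rewrite in_setU1 zD orbT.
- rewrite walk_colours_rcons lx rcons_uniq all_rcons.
  rewrite all_gtn_notin // uc /= ltnSn /=.
  exact: all_gtn_widen (leqnSn _) ltc.
Qed.

Lemma rainbow_within_pendant (D : {set T}) k u v :
  rainbow_within D k -> u \in D -> v \notin D -> e u v ->
  rainbow_within (v |: D) k.+1.
Proof.
move=> [col [col_sym rcD]] uD vD euv.
pose col' a b :=
  if ((a == v) && (b \in D)) || ((b == v) && (a \in D)) then k else col a b.
have col'D : {in D &, col =2 col'}.
  move=> a b aD bD; rewrite /col'.
  by rewrite (negbTE (memPn vD a aD)) (negbTE (memPn vD b bD)).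
have col'vu : col' v u = k by rewrite /col' eqxx uD.
have col'uv : col' u v = k by rewrite /col' eqxx uD orbT.
exists col'; split=> [a b|x y]; first by rewrite /col' orbC col_sym.
have fromD x' y' : x' \in D -> y' \in D ->
    exists p, rainbow_path_within D k col' x' y' p.
  move=> x'D y'D; have [p rp] := rcD x' y' x'D y'D.
  by exists p; apply: rainbow_path_within_eq_col rp.
rewrite !in_setU1; have [->|xv] := eqVneq x v; have [->|yv] := eqVneq y v => //= xD yD.
- by exists [::]; split.
- have [p rp] := fromD u y uD yD; rewrite -col'vu in rp.
  by exists (u :: p); rewrite -col'vu; apply: rainbow_path_within_cons; rewrite // esym.
- have [p rp] := fromD x u xD uD; rewrite -col'uv in rp.
  by exists (rcons p v); rewrite -col'uv; apply: rainbow_path_within_rcons.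
- have [p rp] := fromD x y xD yD; exists p.
  exact: rainbow_path_within_sub (subsetUr _ _) (leqnSn _) rp.
Qed.

Lemma rainbow_within_path (D : {set T}) k d p :
  rainbow_within D k -> d \in D -> path e d p -> uniq p ->
  all (fun v => v \notin D) p -> rainbow_within (D :|: [set:: p]) (k + size p).
Proof.
elim: p D k d => [|v p IH] D k d rD dD.
  by rewrite set_nil setU0 addn0.
move=> /andP[edv pv] /andP[vp up] /andP[vD pD].
rewrite set_cons setUCA setUA addnS -addSn.
apply: IH (rainbow_within_pendant rD dD vD edv) (setU11 _ _) pv up _.
apply/allP=> z zp; rewrite in_setU1 negb_or (allP pD z zp) andbT.
by apply: contraNneq vp => <-.
Qed.

Lemma rainbow_path_within_inord (D : {set T}) n col x y p :
  rainbow_path_within D n.+1 col x y p ->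
  rainbow_path e (fun a b => inord (col a b) : 'I_n.+1) x y p.
Proof.
move=> [px ux lx _ /andP[uc ltc]]; apply/and4P; split=> //; first exact/eqP.
rewrite (map_comp inord) map_inj_in_uniq // => i j /(allP ltc) lti /(allP ltc) ltj.
by move=> eq_ij; rewrite -(inordK lti) -(inordK ltj) eq_ij.
Qed.

Section TwoDominating.
Variables (D : {set T}) (k : nat) (col : T -> T -> nat) (na : T -> T).
Hypothesis rcD :
  forall x y, x \in D -> y \in D -> exists p, rainbow_path_within D k col x y p.
Hypothesis naP : forall w, w \notin D -> na w \in D /\ e w (na w).
Hypothesis otherP : forall w, w \notin D -> exists b, [/\ b \in D, e w b & b != na w].

(* Edges with both ends outside D lie on none of the paths used; they get colour 0. *)
Definition two_dominating_colouring (a b : T) : nat :=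
  if a \in D then (if b \in D then col a b else (a == na b) + k)
  else if b \in D then (b == na a) + k else 0.
Local Notation c' := two_dominating_colouring.

Lemma two_dominating_colouring_sym :
  (forall a b, col a b = col b a) -> forall a b, c' a b = c' b a.
Proof.
move=> col_sym a b; rewrite /c'.
by case: (a \in D); case: (b \in D) => //=; rewrite col_sym.
Qed.

Lemma two_dominating_rainbow x y : exists D' p, rainbow_path_within D' k.+2 c' x y p.
Proof.
have c'D : {in D &, col =2 c'} by move=> a b aD bD; rewrite /c' aD bD.
have fromD x' y' : x' \in D -> y' \in D -> exists p, rainbow_path_within D k c' x' y' p.
  move=> x'D y'D; have [p rp] := rcD x'D y'D.
  by exists p; apply: rainbow_path_within_eq_col rp.
have c'in w b : w \notin D -> b \in D -> b != na w -> c' b w = k.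
  by move=> wD bD bna; rewrite /c' bD (negbTE wD) (negbTE bna).
have c'out w : w \notin D -> c' w (na w) = k.+1.
  by move=> wD; rewrite /c' (negbTE wD) (proj1 (naP wD)) eqxx.
case/boolP: (x \in D) => xD; case/boolP: (y \in D) => yD.
- have [p rp] := fromD x y xD yD.
  by exists D, p; apply: rainbow_path_within_sub (subxx _) (leqW (leqnSn k)) rp.
- have [b [bD eyb bna]] := otherP yD.
  have [p] := fromD x b xD bD; rewrite -(c'in y b yD bD bna) => rp.
  exists (y |: D), (rcons p y).
  have := rainbow_path_within_rcons xD yD _ rp; rewrite esym eyb c'in // => /(_ isT).
  exact: rainbow_path_within_sub (subxx _) (leqnSn _).
- have [naD exna] := naP xD.
  have [p rp] := fromD (na x) y naD yD.
  exists (x |: D), (na x :: p); rewrite -(c'out x xD).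
  apply: rainbow_path_within_cons => //; rewrite c'out //.
  exact: rainbow_path_within_sub (subxx _) (leqnSn _) rp.
- have [<-|xy] := eqVneq x y; first by exists D, [::]; split.
  have [naD exna] := naP xD.
  have [b [bD eyb bna]] := otherP yD.
  have [p] := fromD (na x) b naD bD; rewrite -(c'in y b yD bD bna) => rp.
  have := rainbow_path_within_rcons naD yD _ rp.
  rewrite esym eyb c'in // -(c'out x xD) => /(_ isT) rp'.
  exists (x |: (y |: D)), (na x :: rcons p y).
  apply: rainbow_path_within_cons rp' => //.
  + by rewrite in_setU1 naD orbT.
  + by rewrite in_setU1 negb_or xy.
Qed.

End TwoDominating.

Lemma rc_le_two_dominating (D : {set T}) k :
  rainbow_within D k ->
  (forall w, w \notin D ->
     exists a b, [/\ a \in D, b \in D, a != b, e w a & e w b]) ->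
  rc_le e k.+2.
Proof.
move=> [col [col_sym rcD]] dom2.
pose na w := odflt w [pick a in D | e w a].
have naP w : w \notin D -> na w \in D /\ e w (na w).
  move=> wD; rewrite /na; case: pickP => [a /andP[]|none] //=.
  have [a [b [aD _ _ ewa _]]] := dom2 w wD.
  by have := none a; rewrite aD ewa.
have otherP w : w \notin D -> exists b, [/\ b \in D, e w b & b != na w].
  move=> wD; have [a [b [aD bD ab ewa ewb]]] := dom2 w wD.
  have [aE|] := eqVneq a (na w); last by exists a.
  by exists b; rewrite -aE eq_sym.
pose c := two_dominating_colouring D k col na.
exists k.+2, (fun a b => inord (c a b)); split=> //; split.
  by move=> a b _; rewrite /c two_dominating_colouring_sym.
move=> x y; have [D' [p rp]] := two_dominating_rainbow rcD naP otherP x y.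
by exists p; apply: rainbow_path_within_inord rp.
Qed.

End RainbowWithin.

Lemma cycle_neighbours (T : eqType) (e : rel T) (c : seq T) w :
  cycle e c -> uniq c -> 2 < size c -> w \in c ->
  exists a b, [/\ a \in c, b \in c, uniq [:: w; a; b], e w a & e b w].
Proof.
move=> cyc uc sz wc; case: (rot_to wc) => i q rot_c.
have cq : cycle e (w :: q) by rewrite -rot_c rot_cycle.
have uq : uniq (w :: q) by rewrite -rot_c rot_uniq.
have sq : 2 < size (w :: q) by rewrite -rot_c size_rot.
have mq : {subset w :: q <= c} by move=> z; rewrite -rot_c mem_rot.
case: q cq uq sq mq {rot_c} => [|a [|b q]] //= cq uq _ mq.
move: cq uq => /and3P[ewa _]; rewrite rcons_path => /andP[_ elw] /and4P[wabq abq _ _].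
set l := last b q in elw *; have lbq : l \in b :: q := mem_last b q.
have wa : w != a by apply: contraNneq wabq => ->; exact: mem_head.
have wl : w != l by apply: contraNneq wabq => ->; rewrite in_cons lbq orbT.
have al : a != l by apply: contraNneq abq => ->.
exists a, l; split=> //; first by apply: mq; rewrite !inE eqxx orbT.
  by apply: mq; rewrite (in_cons w) (in_cons a) lbq !orbT.
by rewrite /= !inE !negb_or wa wl al.
Qed.

Lemma induced_forest1 (T : finType) (e : rel T) t : induced_forest e [set t].
Proof.
move=> x [|a p] //=; apply/negP.
move=> /and5P[_ /andP[xap _] /and3P[/set1P xt /set1P a_t _] _ _].
by move: xap; rewrite xt a_t mem_head.
Qed.

Lemma induced_forest_setU1_neighbours (T : finType) (e : rel T) (F : {set T}) w :
  symmetric e -> induced_forest e F -> ~ induced_forest e (w |: F) -> w \notin F ->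
  exists a b, [/\ a \in F, b \in F, a != b, e w a & e w b].
Proof.
move=> esym forestF /not_all_ex_not[x /not_all_ex_not[p /negP/negbNE]].
move=> /and5P[sz ux wFp pth lst] wF.
have inF z : z \in x :: p -> z != w -> z \in F.
  by move=> /(allP wFp); rewrite in_setU1 => /orP[/eqP ->|//]; rewrite eqxx.
have win : w \in x :: p.
  apply: contraT => wout; case/negP: (forestF x p); apply/and5P; split=> //.
  by apply/allP => z zp; apply: inF (zp) _; apply: contraNneq wout => <-.
have cyc : cycle e (x :: p) by rewrite /= rcons_path pth lst.
have [a [b [ac bc /and3P[wab ab _] ewa ebw]]] := cycle_neighbours cyc ux sz win.
move: wab; rewrite !inE !negb_or => /andP[wa wb].
exists a, b; split=> //; last by rewrite esym.
- by apply: inF; rewrite // eq_sym.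
- by apply: inF; rewrite // eq_sym.
- by move: ab; rewrite inE.
Qed.

Lemma connect_boundary (T : finType) (e : rel T) (A : {pred T}) x y :
  connect e x y -> x \in A -> y \notin A ->
  exists a b, [/\ a \in A, b \notin A & e a b].
Proof.
move=> /connectP[p px ->]; elim: p x px => [|z p IH] x /=; first by move=> _ ->.
move=> /andP[exz pz] xA lA; have [zA|zA] := boolP (z \in A); first exact: IH pz zA lA.
by exists x, z.
Qed.

Section ForestGrowth.
Variables (T : finType) (e : rel T) (F : {set T}).
Hypotheses (esym : symmetric e) (forestF : induced_forest e F).
Hypothesis maxF : forall S, induced_forest e S -> #|S| <= #|F|.
Hypothesis conn : connected_graph e.

Lemma maximum_forest_neighbours w :
  w \notin F -> exists a b, [/\ a \in F, b \in F, a != b, e w a & e w b].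
Proof.
move=> wF; apply: induced_forest_setU1_neighbours => // /maxF.
by rewrite cardsU1 wF add1n ltnn.
Qed.

Definition frugal (D : {set T}) : Prop :=
  exists k, rainbow_within e D k /\ k + 3 <= 3 * #|D :&: F|.

Lemma frugal_attach_path (D : {set T}) d p y :
  frugal D -> d \in D -> path e d p -> uniq p -> all (fun v => v \notin D) p ->
  size p <= 3 -> y \in p -> y \in F ->
  exists D', frugal D' /\ #|D :&: F| < #|D' :&: F|.
Proof.
move=> [k [rD budget]] dD dp up pD sp yp yF.
have grow : #|D :&: F| < #|(D :|: [set:: p]) :&: F|.
  have yDF : y \notin D :&: F by rewrite inE negb_and (allP pD y yp).
  apply: (@leq_trans #|y |: (D :&: F)|); first by rewrite cardsU1 yDF.
  apply/subset_leq_card/subsetP => z; rewrite !inE => /orP[/eqP ->|/andP[-> ->] //].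
  by rewrite yp yF orbT.
exists (D :|: [set:: p]); split=> //; exists (k + size p); split.
  exact: (rainbow_within_path esym rD dD dp up pD).
lia.
Qed.

Lemma frugal_step (D : {set T}) :
  frugal D -> ~~ (F \subset D) -> exists D', frugal D' /\ #|D :&: F| < #|D' :&: F|.
Proof.
move=> fD /subsetPn[y0 y0F y0D].
have [x0 x0D] : exists x0, x0 \in D.
  case: fD => k [_ budget]; have /card_gt0P[z] : 0 < #|D :&: F| by lia.
  by rewrite inE => /andP[zD _]; exists z.
have [/exists_inP[d dD /exists_inP[y yF /andP[yD edy]]]|nearF] :=
  boolP [exists d in D, exists y in F, (y \notin D) && e d y].
  by apply: (@frugal_attach_path D d [:: y] y fD dD) => //=; rewrite ?edy ?yD ?mem_head.
have farF d y : d \in D -> y \in F -> y \notin D -> ~~ e d y.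
  move=> dD yF yD; apply: contra nearF => edy.
  by apply/exists_inP; exists d => //; apply/exists_inP; exists y; rewrite ?yD.
(* No vertex of F is adjacent to D: leave the closed neighbourhood A of D towards
   y0 along an edge ab; then a is a neighbour of D outside F, and b is not
   adjacent to D. *)
pose A := D :|: [set v | [exists d in D, e d v]].
have y0A : y0 \notin A.
  by rewrite !inE negb_or y0D /=; apply/exists_inPn => d dD; exact: farF.
have x0A : x0 \in A by rewrite inE x0D.
have [a [b [aA bA eab]]] := connect_boundary (conn x0 y0) x0A y0A.
move: bA; rewrite !inE negb_or => /andP[bD /exists_inPn bfar].
have aD : a \notin D by apply: contraTN eab; exact: bfar.
move: aA; rewrite !inE (negbTE aD) /= => /exists_inP[d dD eda].
have aF : a \notin F by apply: contraTN eda => aF; exact: farF.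
have ab : a != b by apply: contraTneq eda => ->; exact: bfar.
have [bF|bF] := boolP (b \in F).
  apply: (@frugal_attach_path D d [:: a; b] b fD dD) => /=;
    by rewrite ?eda ?eab ?inE ?ab ?aD ?bD ?eqxx ?orbT.
have [y [_ [yF _ _ eby _]]] := maximum_forest_neighbours bF.
have yD : y \notin D by apply: contraTN eby => yD; rewrite esym; exact: bfar.
have ay : a != y by apply: contraNneq aF => ->.
have b_y : b != y by apply: contraNneq bF => ->.
apply: (@frugal_attach_path D d [:: a; b; y] y fD dD) => /=;
  by rewrite ?eda ?eab ?eby ?inE ?negb_or ?ab ?ay ?b_y ?aD ?bD ?yD ?eqxx ?orbT.
Qed.

Lemma frugal_cover (D : {set T}) : frugal D -> exists2 D', frugal D' & F \subset D'.
Proof.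
have [n] := ubnP (#|F| - #|D :&: F|); elim: n D => // n IH D lt_n fD.
have [FD|nFD] := boolP (F \subset D); first by exists D.
have [D' [fD' lt_DD']] := frugal_step fD nFD.
apply: IH fD'; have : #|D' :&: F| <= #|F| := subset_leq_card (subsetIr _ _).
lia.
Qed.

End ForestGrowth.

Theorem theorem2 (T : finType) (e : rel T) (f : nat) :
  0 < #|T| ->
  simple_graph e ->
  connected_graph e ->
  is_forest_number e f ->
  rc_le e (3 * f - 1).
Proof.
move=> /card_gt0P[t _] [esym _] conn [[F [forestF <-]] maxF].
have /card_gt0P[y yF] : 0 < #|F|.
  by have := maxF _ (induced_forest1 e t); rewrite cards1.
have fy : frugal e F [set y].
  exists 0; split; first exact: rainbow_within1.
  by rewrite (setIidPl _) ?sub1set // cards1.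
have [D [k [rD budget]] FD] := frugal_cover esym forestF maxF conn fy.
have dom2 w : w \notin D -> exists a b, [/\ a \in D, b \in D, a != b, e w a & e w b].
  move=> wD; have wF : w \notin F by apply: contraNN wD => /(subsetP FD).
  have [a [b [aF bF ab ewa ewb]]] := maximum_forest_neighbours esym forestF maxF wF.
  by exists a, b; split; rewrite ?(subsetP FD).
have [k' [c [le_k' colouring]]] := rc_le_two_dominating esym rD dom2.
by exists k', c; split=> //; rewrite (setIidPr FD) in budget; lia.
Qed.
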